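(* Let $k$ be a finite field of odd characteristic, $b:V\times V\to W$ a non-degenerate Hermitian $k$-bilinear map, and $\mathcal{X}$ a direct sum decomposition of $V$ with associated set $\mathcal{E}=\mathcal{E}(\mathcal{X})$ of supplementary idempotents. (i) $\mathcal{E}\subseteq\operatorname{Sym}(b)$ if and only if $\mathcal{X}$ is a $\perp$-decomposition of $b$. (ii) $\mathcal{X}$ is a fully refined $\perp$-decomposition of $b$ if and only if $\mathcal{E}$ is a frame of the Jordan algebra $\operatorname{Sym}(b)$. (iii) If $\mathcal{X}$ is a $\perp$-decomposition and $(\alpha,\hat\alpha)\in\operatorname{Isom}^*(b)$, then $\mathcal{X}\alpha=\mathcal{X}(\alpha^{-1}\mathcal{E}\alpha)$ and $\alpha^{-1}\mathcal{E}\alpha=\mathcal{E}(\mathcal{X}\alpha)$, where $\alpha^{-1}\mathcal{E}\alpha=\{\alpha^{-1}e\alpha: e\in\mathcal{E}\}$. In particular $\operatorname{Isom}^*(b)$ acts (by conjugation) on the set of all frames of $\operatorname{Sym}(b)$.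
   Context: $b$ is Hermitian if $W=b(V,V)$ and $b(u,v)=b(v,u)\theta$ for some $\theta\in\mathrm{GL}(W)$; non-degenerate if $b(u,V)=0=b(V,u)$ implies $u=0$. $\operatorname{Sym}(b)=\{f\in\operatorname{End}V: b(uf,v)=b(u,vf)\ \forall u,v\}$, a Jordan algebra under $x\bullet y=\tfrac12(xy+yx)$. For a direct decomposition $\mathcal{X}$ of $V$, $\mathcal{E}(\mathcal{X})$ is the set of projections $e_X$ ($X\in\mathcal{X}$) onto $X$ along the sum of the other members; for a set $\mathcal{F}$ of supplementary idempotents (pairwise orthogonal, summing to $1$) of $\operatorname{End}V$, $\mathcal{X}(\mathcal{F})=\{Vf: f\in\mathcal{F}\}$. A $\perp$-decomposition of $b$ is a set of subspaces, pairwise $b$-orthogonal ($b(X,Y)=0$ for distinct $X,Y$), generating $V$, with no proper subset generating $V$; it is fully refined if each restriction $b_X:X\times X\to b(X,X)$ has no $\perp$-decomposition other than $\{X\}$. In a Jordan algebra, idempotents $e,f$ are orthogonal if $e\bullet f=efe=fef=0$; an idempotent is primitive if it is not a sum of two proper (non-zero, non-identity) orthogonal idempotents; a frame is a set of primitive pairwise orthogonal idempotents summing to $1$. $\operatorname{Isom}^*(b)=\{(\alpha,\hat\alpha)\in\mathrm{GL}(V)\times\mathrm{GL}(W): b(u\alpha,v\alpha)=b(u,v)\hat\alpha\}$. *)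

(* V = 'rV[k]_n, W = 'rV[k]_m; endomorphisms are n x n
   matrices acting on the RIGHT of row vectors (u *m f), matching the
   paper's convention uf and composition ef = "first e then f". *)
From HB Require Import structures.
From mathcomp Require Import all_boot all_order all_algebra.
Set Implicit Arguments. Unset Strict Implicit. Unset Printing Implicit Defensive.
Import GRing.Theory.
Local Open Scope ring_scope.

Definition bilinear_map (k : fieldType) (n m : nat)
    (b : 'rV[k]_n -> 'rV[k]_n -> 'rV[k]_m) : Prop :=
  (forall (a : k) u1 u2 v, b (a *: u1 + u2) v = a *: b u1 v + b u2 v) /\
  (forall (a : k) u v1 v2, b u (a *: v1 + v2) = a *: b u v1 + b u v2).

Definition spans_codomain (k : finFieldType) (n m : nat)
    (b : 'rV[k]_n -> 'rV[k]_n -> 'rV[k]_m) : Prop :=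
  ((\sum_(u : 'rV[k]_n) \sum_(v : 'rV[k]_n) <<b u v>>) == 1%:M)%MS.

Definition hermitian_map (k : finFieldType) (n m : nat)
    (b : 'rV[k]_n -> 'rV[k]_n -> 'rV[k]_m) : Prop :=
  spans_codomain b /\
  exists theta : 'M[k]_m, theta \in unitmx /\ forall u v, b u v = b v u *m theta.

Definition nondegenerate_map (k : fieldType) (n m : nat)
    (b : 'rV[k]_n -> 'rV[k]_n -> 'rV[k]_m) : Prop :=
  forall u, (forall v, b u v = 0) -> (forall v, b v u = 0) -> u = 0.

Definition Sym (k : fieldType) (n m : nat)
    (b : 'rV[k]_n -> 'rV[k]_n -> 'rV[k]_m) (f : 'M[k]_n) : Prop :=
  forall u v, b (u *m f) v = b u (v *m f).

Definition jprod (k : fieldType) (n : nat) (x y : 'M[k]_n) : 'M[k]_n :=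
  (2%:R : k)^-1 *: (x *m y + y *m x).

Definition sym_idem (k : fieldType) (n m : nat)
    (b : 'rV[k]_n -> 'rV[k]_n -> 'rV[k]_m) (e : 'M[k]_n) : Prop :=
  Sym b e /\ jprod e e = e.

Definition jorth (k : fieldType) (n : nat) (e f : 'M[k]_n) : Prop :=
  jprod e f = 0 /\ e *m f *m e = 0 /\ f *m e *m f = 0.

Definition primitive (k : fieldType) (n m : nat)
    (b : 'rV[k]_n -> 'rV[k]_n -> 'rV[k]_m) (e : 'M[k]_n) : Prop :=
  sym_idem b e /\ e != 0 /\
  ~ (exists f g : 'M[k]_n,
        sym_idem b f /\ sym_idem b g /\ f != 0 /\ f != 1%:M /\
        g != 0 /\ g != 1%:M /\ jorth f g /\ e = f + g).

Definition frame (k : fieldType) (n m : nat)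
    (b : 'rV[k]_n -> 'rV[k]_n -> 'rV[k]_m) (J : finType) (F : J -> 'M[k]_n) : Prop :=
  (forall j, primitive b (F j)) /\
  (forall i j, i != j -> jorth (F i) (F j)) /\
  \sum_(j : J) F j = 1%:M.

Definition isom_star (k : fieldType) (n m : nat)
    (b : 'rV[k]_n -> 'rV[k]_n -> 'rV[k]_m) (alpha : 'M[k]_n) (alphah : 'M[k]_m) : Prop :=
  [/\ alpha \in unitmx, alphah \in unitmx &
      forall u v, b (u *m alpha) (v *m alpha) = b u v *m alphah].

Definition direct_decomp (k : fieldType) (n : nat) (I : finType) (X : I -> 'M[k]_n) : Prop :=
  [/\ forall i, X i != 0, mxdirect (\sum_i X i) & (\sum_i X i == 1%:M)%MS].

Definition projE (k : fieldType) (n : nat) (I : finType) (X : I -> 'M[k]_n) (i : I) : 'M[k]_n :=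
  proj_mx (X i) (\sum_(j | j != i) X j)%MS.

(* X(F) = {V f : f in F}: row space of f is V f (f = 1 *m f) *)

Definition perp_decomp_in (k : fieldType) (n m : nat)
    (b : 'rV[k]_n -> 'rV[k]_n -> 'rV[k]_m) (U : 'M[k]_n) (J : finType) (Y : J -> 'M[k]_n) : Prop :=
  [/\ forall j, (Y j <= U)%MS,
      forall i j, i != j -> forall u v : 'rV[k]_n,
        (u <= Y i)%MS -> (v <= Y j)%MS -> b u v = 0,
      (U <= \sum_j Y j)%MS &
      forall S : {set J}, S != setT -> ~~ (U <= \sum_(j in S) Y j)%MS].

Definition perp_decomp (k : fieldType) (n m : nat)
    (b : 'rV[k]_n -> 'rV[k]_n -> 'rV[k]_m) (I : finType) (X : I -> 'M[k]_n) : Prop :=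
  perp_decomp_in b 1%:M X.

Definition fully_refined (k : fieldType) (n m : nat)
    (b : 'rV[k]_n -> 'rV[k]_n -> 'rV[k]_m) (I : finType) (X : I -> 'M[k]_n) : Prop :=
  perp_decomp b X /\
  forall (i : I) (J : finType) (Y : J -> 'M[k]_n),
    perp_decomp_in b (X i) Y -> forall j, (Y j == X i)%MS.

(* An idempotent e of End V is the projection onto Ve along V(1 - e), and by bilinearity
   b(ue, v) - b(u, ve) = b(ue, v - ve) - b(u - ue, ve); hence e lies in Sym(b) exactly when
   Ve and V(1 - e) are orthogonal, which gives (i).  Nondegeneracy makes orthogonal subspaces
   spanning V independent, so an orthogonal splitting of a summand X together with the other
   summands is again a direct decomposition.  In odd characteristic idempotents e, f are
   Jordan-orthogonal iff ef = fe = 0, so writing e_X = f + g with f, g orthogonal idempotents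
   of Sym(b) is the same as splitting X into the orthogonal pieces Vf and Vg: primitive
   projections are those onto perp-indecomposable summands, which is (ii).  Conjugation by an
   isometry alpha preserves Sym(b), and alpha^-1 e_X alpha is the identity on X alpha and zero
   on the other Y alpha, which gives (iii). *)

From HB Require Import structures.
From mathcomp Require Import all_boot all_order all_algebra.
Set Implicit Arguments. Unset Strict Implicit. Unset Printing Implicit Defensive.
Import GRing.Theory.
Local Open Scope ring_scope.

Section MulmxAgreement.
Variables (k : fieldType) (n : nat).
Implicit Types M N : 'M[k]_n.

Lemma eq_mulmx_adds p1 p2 (U1 : 'M[k]_(p1, n)) (U2 : 'M_(p2, n)) M N :
  (forall u : 'rV_n, (u <= U1)%MS -> u *m M = u *m N) ->
  (forall u : 'rV_n, (u <= U2)%MS -> u *m M = u *m N) ->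
  forall u : 'rV_n, (u <= U1 + U2)%MS -> u *m M = u *m N.
Proof.
move=> H1 H2 u /sub_addsmxP[w ->].
by rewrite !mulmxDl H1 ?submxMl // H2 ?submxMl.
Qed.

Lemma eq_mulmx_sums (J : finType) (P : pred J) (Y : J -> 'M[k]_n) M N :
  (forall j (u : 'rV_n), P j -> (u <= Y j)%MS -> u *m M = u *m N) ->
  forall u : 'rV_n, (u <= \sum_(j | P j) Y j)%MS -> u *m M = u *m N.
Proof.
move=> H; elim/big_rec: _ => [|j S Pj IH].
  by move=> u /submx0null ->; rewrite !mul0mx.
by apply: eq_mulmx_adds => // u; apply: H.
Qed.

Lemma eq_mulmx_full p (U : 'M[k]_(p, n)) M N :
  (1%:M <= U)%MS -> (forall u : 'rV_n, (u <= U)%MS -> u *m M = u *m N) -> M = N.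
Proof.
move=> fullU H; apply/row_matrixP => r.
rewrite -[M]mul1mx -[N]mul1mx !row_mul; apply: H.
exact: submx_trans (row_sub r 1%:M) fullU.
Qed.

Lemma submx_mul_fixed p q (u : 'M[k]_(p, n)) (P : 'M_(q, n)) M :
  (u <= P)%MS -> P *m M = P -> u *m M = u.
Proof. by case/submxP=> D ->; rewrite -mulmxA => ->. Qed.

Lemma row_sub_eq0 p (U : 'M[k]_(p, n)) :
  (forall u : 'rV_n, (u <= U)%MS -> u = 0) -> U = 0.
Proof. by move=> H; apply/row_matrixP => r; rewrite row0; apply/H/row_sub. Qed.

Lemma proj_mx_eqmx (U U' V : 'M[k]_n) :
  (U :=: U')%MS -> (U :&: V = 0)%MS -> (1%:M <= U + V)%MS -> proj_mx U V = proj_mx U' V.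
Proof.
move=> eqU capUV fullUV.
have capU'V : (U' :&: V = 0)%MS.
  by apply/eqP; rewrite -submx0 -capUV capmxS // eqU.
apply: eq_mulmx_full fullUV _; apply: eq_mulmx_adds => u hu.
  by rewrite !proj_mx_id // -eqU.
by rewrite !proj_mx_0.
Qed.

End MulmxAgreement.

Section JordanIdempotents.
Variables (k : fieldType) (n : nat).
Hypothesis H2 : (2%:R : k) != 0.

Definition orth_idems (f g : 'M[k]_n) :=
  [/\ f *m f = f, g *m g = g, f *m g = 0 & g *m f = 0].

Definition sym_splits m (b : 'rV[k]_n -> 'rV[k]_n -> 'rV[k]_m) (e : 'M[k]_n) :=
  exists f g, [/\ Sym b f, Sym b g, orth_idems f g, f != 0 & g != 0] /\ e = f + g.

Lemma jprod_idemE (e : 'M[k]_n) : jprod e e = e <-> e *m e = e.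
Proof. by rewrite /jprod -mulr2n -scaler_nat scalerA mulVf // scale1r. Qed.

Lemma jorthE (e f : 'M[k]_n) : e *m e = e -> jorth e f <-> e *m f = 0 /\ f *m e = 0.
Proof.
move=> ee; split=> [[jef [efe _]] | [ef fe]]; last first.
  by rewrite /jorth /jprod ef fe addr0 scaler0 !mul0mx.
have anti : e *m f = - (f *m e).
  apply/eqP; rewrite -addr_eq0; move/eqP: jef.
  by rewrite /jprod scaler_eq0 invr_eq0 (negPf H2).
(* Multiplying [ef = - fe] on the left by [e] gives [ef = - efe = 0]. *)
have ef : e *m f = 0.
  by have := congr1 (mulmx e) anti; rewrite mulmxA ee mulmxN mulmxA efe oppr0.
by split=> //; apply/eqP; rewrite -oppr_eq0 -anti ef.
Qed.

Lemma primitiveE m (b : 'rV[k]_n -> 'rV[k]_n -> 'rV[k]_m) (e : 'M[k]_n) :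
  primitive b e <-> [/\ Sym b e, e *m e = e, e != 0 & ~ sym_splits b e].
Proof.
split.
  case=> [[se /jprod_idemE ee] [e0 nsplit]]; split=> // -[f [g [[sf sg]]]].
  case=> ff gg fg gf f0 g0 efg; apply: nsplit; exists f, g.
  have not1 (h h' : 'M[k]_n) : h *m h' = 0 -> h' != 0 -> h != 1%:M.
    by move=> hh' h'0; apply: contraNneq h'0 => h1; rewrite -[h']mul1mx -h1 hh'.
  split; first by split; last exact/jprod_idemE.
  split; first by split; last exact/jprod_idemE.
  split=> //; split; first exact: not1 fg g0.
  split=> //; split; first exact: not1 gf f0.
  by split; first exact/jorthE.
case=> se ee e0 nsplit; split; first by split; last exact/jprod_idemE.
split=> // -[f [g [[sf /jprod_idemE ff] [[sg /jprod_idemE gg]]]]].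
case=> f0 [_ [g0 [_ [/(jorthE _ ff)[fg gf] efg]]]].
by apply: nsplit; exists f, g.
Qed.

End JordanIdempotents.

Section Orthogonality.
Variables (k : fieldType) (n m : nat) (b : 'rV[k]_n -> 'rV[k]_n -> 'rV[k]_m).
Hypothesis Hbil : bilinear_map b.

Lemma bilinDl u1 u2 v : b (u1 + u2) v = b u1 v + b u2 v.
Proof. by have := (proj1 Hbil) 1 u1 u2 v; rewrite !scale1r. Qed.

Lemma bilinDr u v1 v2 : b u (v1 + v2) = b u v1 + b u v2.
Proof. by have := (proj2 Hbil) 1 u v1 v2; rewrite !scale1r. Qed.

Lemma bilin0l v : b 0 v = 0.
Proof. by apply: (@addrI _ (b 0 v)); rewrite -bilinDl !addr0. Qed.

Lemma bilin0r u : b u 0 = 0.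
Proof. by apply: (@addrI _ (b u 0)); rewrite -bilinDr !addr0. Qed.

Definition bortho p q (U : 'M[k]_(p, n)) (W : 'M[k]_(q, n)) :=
  forall u v : 'rV_n, (u <= U)%MS -> (v <= W)%MS -> b u v = 0 /\ b v u = 0.

Definition pairwise_bortho (J : finType) (Y : J -> 'M[k]_n) :=
  forall i j, i != j -> bortho (Y i) (Y j).

Lemma bortho_sym p q (U : 'M_(p, n)) (W : 'M_(q, n)) : bortho U W -> bortho W U.
Proof. by move=> H u v hu hv; have [? ?] := H v u hv hu. Qed.

Lemma borthoSl p p' q (U : 'M_(p, n)) (U' : 'M_(p', n)) (W : 'M_(q, n)) :
  (U' <= U)%MS -> bortho U W -> bortho U' W.
Proof. by move=> sU'U H u v hu hv; apply: H (submx_trans hu sU'U) hv. Qed.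

Lemma bortho_addsl p1 p2 q (U1 : 'M_(p1, n)) (U2 : 'M_(p2, n)) (W : 'M_(q, n)) :
  bortho U1 W -> bortho U2 W -> bortho (U1 + U2)%MS W.
Proof.
move=> H1 H2 u v /sub_addsmxP[w ->] hv.
have [a1 a2] := H1 _ v (submxMl w.1 U1) hv.
have [c1 c2] := H2 _ v (submxMl w.2 U2) hv.
by rewrite bilinDl bilinDr a1 a2 c1 c2 addr0.
Qed.

Lemma bortho_addsr p q1 q2 (U : 'M_(p, n)) (W1 : 'M_(q1, n)) (W2 : 'M_(q2, n)) :
  bortho U W1 -> bortho U W2 -> bortho U (W1 + W2)%MS.
Proof. by move=> H1 H2; apply/bortho_sym/bortho_addsl; apply: bortho_sym. Qed.

Lemma bortho_sumsl (J : finType) (P : pred J) (Y : J -> 'M_n) q (W : 'M_(q, n)) :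
  (forall j, P j -> bortho (Y j) W) -> bortho (\sum_(j | P j) Y j)%MS W.
Proof.
move=> H; elim/big_rec: _ => [|j S Pj IH]; last exact: bortho_addsl (H j Pj) IH.
by move=> u v /submx0null -> _; rewrite bilin0l bilin0r.
Qed.

Lemma sym_proj_mx (A C : 'M_n) :
  bortho A C -> (1%:M <= A + C)%MS -> Sym b (proj_mx A C).
Proof.
move=> oAC fullAC u v; set P := proj_mx A C.
have hu : (u <= A + C)%MS := submx_trans (submx1 u) fullAC.
have hv : (v <= A + C)%MS := submx_trans (submx1 v) fullAC.
rewrite -[v in LHS](subrK (v *m P)) -[u in RHS](subrK (u *m P)).
rewrite bilinDr bilinDl (proj1 (oAC _ _ (proj_mx_sub A C u) (proj_mx_compl_sub hv))).
by rewrite (proj2 (oAC _ _ (proj_mx_sub A C v) (proj_mx_compl_sub hu))).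
Qed.

Lemma sym_idem_bortho f g : Sym b f -> Sym b g -> orth_idems f g -> bortho f g.
Proof.
move=> sf sg [ff gg fg gf] u v hu hv.
rewrite -(submx_mul_fixed hu ff) -(submx_mul_fixed hv gg) sf sg -!mulmxA fg gf.
by rewrite !mulmx0 !bilin0r.
Qed.

Lemma perp_decomp_in_pairwise (U : 'M_n) (J : finType) (Y : J -> 'M_n) :
  perp_decomp_in b U Y -> pairwise_bortho Y.
Proof.
case=> _ oY _ _ i j ij u v hu hv; split; first exact: oY ij u v hu hv.
by apply: oY v u hv hu; rewrite eq_sym.
Qed.

Lemma perp_decomp_in_orth_idems (U f g : 'M_n) :
  Sym b f -> Sym b g -> orth_idems f g -> f != 0 -> g != 0 -> ((f + g)%R :=: U)%MS ->
  perp_decomp_in b U (fun x : bool => if x then f else g).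
Proof.
move=> sf sg fgI f0 g0 defU; set Y := fun x : bool => _.
have [ff gg fg gf] := fgI.
have Yidem x : Y x *m Y x = Y x by case: x.
have Yorth x : Y x *m Y (~~ x) = 0 by case: x.
have YU x : (Y x <= U)%MS.
  have -> : Y x = Y x *m (f + g).
    by case: x; rewrite /Y mulmxDr ?ff ?fg ?gf ?gg ?addr0 ?add0r.
  by rewrite -defU submxMl.
split=> //.
- have ofg := sym_idem_bortho sf sg fgI.
  by move=> [] [] //= _ u v hu hv; [exact: (ofg u v hu hv).1 | exact: (ofg v u hv hu).2].
- by rewrite big_bool -defU addmx_sub_adds.
move=> S; rewrite -properT => /properP[_ [x _ xS]]; apply/negP => sUS.
have sSY : (\sum_(j in S) Y j <= Y (~~ x))%MS.
  by apply/sumsmx_subP => j jS; have -> : j = ~~ x by case: j x jS xS => [] [] // ->.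
have sYY := submx_trans (YU x) (submx_trans sUS sSY).
have Yne0 : Y x != 0 by case: (x).
by move/eqP: Yne0; apply; rewrite -(submx_mul_fixed sYY (Yidem (~~ x))) Yorth.
Qed.

Hypothesis Hnd : nondegenerate_map b.

Lemma bortho_full_eq0 p (U : 'M_(p, n)) : bortho U 1%:M -> U = 0.
Proof.
move=> H; apply: row_sub_eq0 => u hu.
by apply: Hnd => v; case: (H u v hu (submx1 _)).
Qed.

Lemma bortho_capmx0 (A C : 'M_n) :
  bortho A C -> (1%:M <= A + C)%MS -> (A :&: C = 0)%MS.
Proof.
move=> oAC fullAC; apply: bortho_full_eq0 => u v hu _.
have oCapAC : bortho (A :&: C)%MS (A + C)%MS.
  apply: bortho_addsr; first exact: borthoSl (capmxSr A C) (bortho_sym oAC).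
  exact: borthoSl (capmxSl A C) oAC.
exact: oCapAC hu (submx_trans (submx1 v) fullAC).
Qed.

Lemma sym_splits_proj_mx (A B Z : 'M_n) :
  bortho A B -> bortho A Z -> bortho B Z -> (1%:M <= A + B + Z)%MS ->
  A != 0 -> B != 0 -> sym_splits b (proj_mx (A + B)%MS Z).
Proof.
move=> oAB oAZ oBZ full A0 B0.
have fullA : (1%:M <= A + (B + Z))%MS by rewrite addsmxA.
have fullB : (1%:M <= B + (A + Z))%MS by rewrite addsmxA (addsmxC B).
have oA : bortho A (B + Z)%MS := bortho_addsr oAB oAZ.
have oB : bortho B (A + Z)%MS := bortho_addsr (bortho_sym oAB) oBZ.
have capA := bortho_capmx0 oA fullA.
have capB := bortho_capmx0 oB fullB.
have capAB := bortho_capmx0 (bortho_addsl oAZ oBZ) full.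
set f := proj_mx A (B + Z)%MS; set g := proj_mx B (A + Z)%MS.
have sfA : (f <= A)%MS by rewrite -[f]mul1mx proj_mx_sub.
have sgB : (g <= B)%MS by rewrite -[g]mul1mx proj_mx_sub.
exists f, g; split; first split.
- exact (sym_proj_mx oA fullA).
- exact (sym_proj_mx oB fullB).
- split; [exact: proj_mx_proj | exact: proj_mx_proj | |].
    exact: proj_mx_0 capB (submx_trans sfA (addsmxSl A Z)).
  exact: proj_mx_0 capA (submx_trans sgB (addsmxSl B Z)).
- by apply: contraNneq A0 => f0; rewrite -(proj_mx_id capA (submx_refl A)) -/f f0 mulmx0.
- by apply: contraNneq B0 => g0; rewrite -(proj_mx_id capB (submx_refl B)) -/g g0 mulmx0.
apply: eq_mulmx_full full _; apply: eq_mulmx_adds; first apply: eq_mulmx_adds.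
- move=> u hu; rewrite mulmxDr proj_mx_id ?(submx_trans hu (addsmxSl A B)) //.
  by rewrite proj_mx_id // proj_mx_0 ?addr0 // (submx_trans hu (addsmxSl A Z)).
- move=> u hu; rewrite mulmxDr proj_mx_id ?(submx_trans hu (addsmxSr A B)) //.
  by rewrite proj_mx_0 ?proj_mx_id ?add0r // (submx_trans hu (addsmxSl B Z)).
- move=> u hu; rewrite mulmxDr !proj_mx_0 ?addr0 //.
    exact: submx_trans hu (addsmxSr A Z).
  exact: submx_trans hu (addsmxSr B Z).
Qed.

End Orthogonality.

Section DirectDecomposition.
Variables (k : fieldType) (n : nat) (I : finType) (X : I -> 'M[k]_n).
Hypothesis HX : direct_decomp X.

Definition sum_other i := (\sum_(j | j != i) X j)%MS.

Lemma direct_decomp_neq0 i : X i != 0.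
Proof. by case: HX. Qed.

Lemma capmx_sum_other i : (X i :&: sum_other i = 0)%MS.
Proof. by case: HX => _ /mxdirect_sumsP/(_ i isT). Qed.

Lemma direct_decomp_full : (1%:M <= \sum_i X i)%MS.
Proof. by case: HX => _ _ /eqmxP->. Qed.

Lemma adds_sum_other_full i : (1%:M <= X i + sum_other i)%MS.
Proof. by have := direct_decomp_full; rewrite (bigD1 i). Qed.

Lemma projE_mul p i j (u : 'M_(p, n)) :
  (u <= X j)%MS -> u *m projE X i = if i == j then u else 0.
Proof.
move=> hu; have [->|ij] := eqVneq i j; first exact: proj_mx_id (capmx_sum_other j) hu.
by apply: proj_mx_0 (capmx_sum_other i) _; rewrite (sumsmx_sup j) // eq_sym.
Qed.

Lemma eq_mulmx_decomp (M N : 'M_n) :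
  (forall j (u : 'rV_n), (u <= X j)%MS -> u *m M = u *m N) -> M = N.
Proof.
move=> H; apply: eq_mulmx_full direct_decomp_full _.
by apply: eq_mulmx_sums => j u _; apply: H.
Qed.

Lemma projE_sum : \sum_i projE X i = 1%:M.
Proof.
apply: eq_mulmx_decomp => j u hu; rewrite mulmx1 mulmx_sumr.
by under eq_bigr do rewrite (projE_mul _ hu); rewrite -big_mkcond big_pred1_eq.
Qed.

Lemma projE_sub i : (projE X i <= X i)%MS.
Proof. by rewrite -[projE X i]mul1mx proj_mx_sub. Qed.

Lemma projE_eqmx i : (projE X i == X i)%MS.
Proof.
rewrite /eqmx projE_sub /=.
by have := projE_mul i (submx_refl (X i)); rewrite eqxx => <-; apply: submxMl.
Qed.

Lemma projE_idem i : projE X i *m projE X i = projE X i.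
Proof. by rewrite (projE_mul i (projE_sub i)) eqxx. Qed.

Lemma projE_orth i j : i != j -> projE X i *m projE X j = 0.
Proof. by move=> ij; rewrite (projE_mul j (projE_sub i)) eq_sym (negPf ij). Qed.

Lemma projE_neq0 i : projE X i != 0.
Proof.
apply: contraNneq (direct_decomp_neq0 i) => e0.
by rewrite -submx0 -(eqmxP (projE_eqmx i)) e0 submx0.
Qed.

Lemma direct_decomp_irredundant (S : {set I}) :
  S != setT -> ~~ (1%:M <= \sum_(j in S) X j)%MS.
Proof.
rewrite -properT => /properP[_ [i _ iS]]; apply/negP => fullS.
have sXi : (X i <= sum_other i)%MS.
  apply: submx_trans (submx1 _) (submx_trans fullS _).
  by apply/sumsmx_subP => j jS; rewrite (sumsmx_sup j) //; apply: contraNneq iS => <-.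
move/eqP: (direct_decomp_neq0 i); apply; apply/eqP.
by rewrite -submx0 -(capmx_sum_other i) sub_capmx submx_refl.
Qed.

Lemma direct_decompMr (a : 'M_n) : a \in unitmx -> direct_decomp (fun i => X i *m a).
Proof.
move=> au; have afree : row_free a by rewrite row_free_unit.
case: HX => X0 dX /eqmxP fullX; split.
- by move=> i; apply: contraNneq (X0 i) => Xa0; rewrite -(mulmxK au (X i)) Xa0 mul0mx.
- move: dX; rewrite !mxdirectE /= -sumsmxMr mxrankMfree //.
  by under [Q in _ -> _ == Q]eq_bigr do rewrite mxrankMfree //.
- by rewrite /eqmx submx1 -sumsmxMr (eqmxMr a fullX) mul1mx sub1mx row_full_unit.
Qed.

End DirectDecomposition.

Section SymProjections.
Variables (k : fieldType) (n m : nat) (b : 'rV[k]_n -> 'rV[k]_n -> 'rV[k]_m).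
Hypotheses (Hbil : bilinear_map b) (Hnd : nondegenerate_map b) (H2 : (2%:R : k) != 0).
Variables (I : finType) (X : I -> 'M[k]_n).
Hypothesis HX : direct_decomp X.

Lemma bortho_sum_other : pairwise_bortho b X -> forall i, bortho b (X i) (sum_other X i).
Proof.
by move=> oX i; apply: bortho_sym; exact (bortho_sumsl Hbil (fun j ji => oX j i ji)).
Qed.

Lemma sym_projE_pairwise :
  (forall i, Sym b (projE X i)) <-> pairwise_bortho b X.
Proof.
split=> [symE i j ij u v hu hv | oX i].
  have ui : u *m projE X i = u by rewrite (projE_mul HX i hu) eqxx.
  have vi : v *m projE X i = 0 by rewrite (projE_mul HX i hv) (negPf ij).
  by split; [rewrite -{1}ui symE vi bilin0r | rewrite -{1}ui -symE vi bilin0l].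
exact (sym_proj_mx Hbil (bortho_sum_other oX (i:=i)) (adds_sum_other_full HX i)).
Qed.

Lemma perp_decomp_pairwise : perp_decomp b X <-> pairwise_bortho b X.
Proof.
split; first exact: perp_decomp_in_pairwise.
move=> oX; split.
- by move=> j; apply: submx1.
- by move=> i j ij u v hu hv; case: (oX i j ij u v hu hv).
- exact: direct_decomp_full HX.
- exact: direct_decomp_irredundant HX.
Qed.

Lemma sym_projE_perp_decomp : (forall i, Sym b (projE X i)) <-> perp_decomp b X.
Proof.
split=> [symE | perpX]; first exact/perp_decomp_pairwise/sym_projE_pairwise.
exact/sym_projE_pairwise/perp_decomp_pairwise.
Qed.

Lemma primitive_projE_refined : fully_refined b X -> forall i, primitive b (projE X i).
Proof.
case=> /sym_projE_perp_decomp symE refX i; apply/(primitiveE H2).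
split; [exact: symE | exact (projE_idem HX i) | exact (projE_neq0 HX i) |].
case=> f [g [[sf sg fgI f0 g0] efg]].
have defXi : ((f + g)%R :=: X i)%MS by rewrite -efg; apply/eqmxP/projE_eqmx.
have refXi := refX i _ _ (perp_decomp_in_orth_idems Hbil sf sg fgI f0 g0 defXi).
have /andP[sfX _] := refXi true; have /andP[_ sXg] := refXi false.
case: fgI => _ gg fg _; move/eqP: f0; apply.
by rewrite -(submx_mul_fixed (submx_trans sfX sXg) gg) fg.
Qed.

Lemma perp_decomp_in_trivial : (forall i, primitive b (projE X i)) ->
  forall i (J : finType) (Y : J -> 'M_n), perp_decomp_in b (X i) Y ->
  forall j, (Y j == X i)%MS.
Proof.
move=> primE i J Y perpY j0; have [sYX _ covX irrY] := perpY.
have symE l : Sym b (projE X l) by case/(primitiveE H2): (primE l).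
have /(primitiveE H2)[_ _ _ nsplit] := primE i.
rewrite /eqmx sYX /=; apply/idPn => nXA; apply: nsplit.
set A := Y j0; set B := (\sum_(j | j != j0) Y j)%MS; set Z := sum_other X i.
have oXZ : bortho b (X i) Z by apply/bortho_sum_other/sym_projE_pairwise.
have oY := perp_decomp_in_pairwise perpY.
have oAB : bortho b A B.
  by apply: bortho_sym; exact (bortho_sumsl Hbil (fun j jj0 => oY j j0 jj0)).
have sBX : (B <= X i)%MS by apply/sumsmx_subP => j _; exact: sYX.
have XAB : (X i :=: A + B)%MS.
  apply/eqmxP; rewrite /eqmx addsmx_sub sYX sBX !andbT.
  by move: covX; rewrite (bigD1 j0).
have A0 : A != 0.
  have S_neq : [set~ j0] != setT by apply/eqP => /setP/(_ j0); rewrite !inE eqxx.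
  apply: contraNneq (irrY _ S_neq) => A0.
  rewrite (eq_bigl (fun j => j != j0)) => [|j]; last by rewrite in_setC1.
  by rewrite XAB A0 adds0mx submx_refl.
have B0 : B != 0 by apply: contraNneq nXA => B0; rewrite XAB B0 addsmx0.
have -> : projE X i = proj_mx (A + B)%MS Z.
  exact: proj_mx_eqmx XAB (capmx_sum_other HX i) (adds_sum_other_full HX i).
have oAZ : bortho b A Z := borthoSl (sYX j0) oXZ.
have oBZ : bortho b B Z := borthoSl sBX oXZ.
have full : (1%:M <= A + B + Z)%MS.
  by apply: submx_trans (adds_sum_other_full HX i) _; apply: addsmxS; rewrite ?XAB.
exact (sym_splits_proj_mx Hbil Hnd oAB oAZ oBZ full A0 B0).
Qed.

Lemma fully_refined_frame : fully_refined b X <-> frame b (projE X).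
Proof.
split=> [refX | [primE _]].
  split; first exact: primitive_projE_refined.
  split; last exact: projE_sum HX.
  move=> i j ij; apply/(jorthE H2 _ (projE_idem HX i)).
  by split; apply: (projE_orth HX); rewrite // eq_sym.
split; last exact: perp_decomp_in_trivial.
by apply/sym_projE_perp_decomp => i; case/(primitiveE H2): (primE i).
Qed.

End SymProjections.

Section Conjugation.
Variables (k : fieldType) (n : nat) (a : 'M[k]_n).
Hypothesis au : a \in unitmx.
Implicit Types f g : 'M[k]_n.

Definition mxconj f := invmx a *m f *m a.

Lemma mxconjM f g : mxconj (f *m g) = mxconj f *m mxconj g.
Proof. by rewrite /mxconj !mulmxA mulmxK. Qed.

Lemma mxconjD f g : mxconj (f + g) = mxconj f + mxconj g.
Proof. by rewrite /mxconj mulmxDr mulmxDl. Qed.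

Lemma mxconjZ (c : k) f : mxconj (c *: f) = c *: mxconj f.
Proof. by rewrite /mxconj -scalemxAr -scalemxAl. Qed.

Lemma mxconj0 : mxconj 0 = 0.
Proof. by rewrite /mxconj mulmx0 mul0mx. Qed.

Lemma mxconj1 : mxconj 1%:M = 1%:M.
Proof. by rewrite /mxconj mulmx1 mulVmx. Qed.

Lemma mxconj_sum (J : finType) (F : J -> 'M[k]_n) :
  mxconj (\sum_j F j) = \sum_j mxconj (F j).
Proof. by rewrite /mxconj mulmx_sumr mulmx_suml. Qed.

Lemma mxconj_inj : injective mxconj.
Proof.
move=> f g /(congr1 (fun h => a *m h *m invmx a)).
by rewrite /mxconj !mulmxA mulmxV // mul1mx !mulmxK // mul1mx.
Qed.

Lemma mxconj_eq0 f : (mxconj f == 0) = (f == 0).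
Proof. by rewrite -{1}mxconj0 (inj_eq mxconj_inj). Qed.

Lemma mxconj_jorth f g : jorth f g -> jorth (mxconj f) (mxconj g).
Proof.
case=> jfg [fgf gfg]; rewrite /jorth -!mxconjM fgf gfg mxconj0; split=> //.
by rewrite /jprod -!mxconjM -mxconjD -mxconjZ -/(jprod f g) jfg mxconj0.
Qed.

Lemma mxconj_orth_idems f g : orth_idems f g -> orth_idems (mxconj f) (mxconj g).
Proof. by case=> ff gg fg gf; split; rewrite -mxconjM ?ff ?gg ?fg ?gf ?mxconj0. Qed.

End Conjugation.

Lemma mxconjK (k : fieldType) n (a f : 'M[k]_n) :
  a \in unitmx -> mxconj (invmx a) (mxconj a f) = f.
Proof. by move=> au; rewrite /mxconj invmxK !mulmxA mulmxV // mul1mx mulmxK. Qed.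

Section IsometryConjugation.
Variables (k : fieldType) (n m : nat) (b : 'rV[k]_n -> 'rV[k]_n -> 'rV[k]_m).
Variables (a : 'M[k]_n) (ah : 'M[k]_m).
Hypothesis isoA : isom_star b a ah.

Let au : a \in unitmx. Proof. by case: isoA. Qed.

Lemma isom_star_inv : isom_star b (invmx a) (invmx ah).
Proof.
case: isoA => _ ahu isoAb; split; rewrite ?unitmx_inv // => u v.
have := isoAb (u *m invmx a) (v *m invmx a).
by rewrite !mulmxKV // => ->; rewrite mulmxK.
Qed.

Lemma sym_mxconj f : Sym b f -> Sym b (mxconj a f).
Proof.
case: isoA => _ _ isoAb sf u v; rewrite /mxconj !mulmxA.
by rewrite -{1}(mulmxKV au v) isoAb sf -isoAb mulmxKV.
Qed.

Lemma sym_splits_mxconj e : sym_splits b e -> sym_splits b (mxconj a e).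
Proof.
case=> f [g [[sf sg fgI f0 g0] efg]]; exists (mxconj a f), (mxconj a g).
split; last by rewrite efg mxconjD.
by split; rewrite ?mxconj_eq0 //;
  [apply: sym_mxconj | apply: sym_mxconj | apply: mxconj_orth_idems].
Qed.

End IsometryConjugation.

Section FrameConjugation.
Variables (k : fieldType) (n m : nat) (b : 'rV[k]_n -> 'rV[k]_n -> 'rV[k]_m).
Hypothesis H2 : (2%:R : k) != 0.
Variables (a : 'M[k]_n) (ah : 'M[k]_m).
Hypothesis isoA : isom_star b a ah.

Let au : a \in unitmx. Proof. by case: isoA. Qed.

Lemma primitive_mxconj e : primitive b e -> primitive b (mxconj a e).
Proof.
case/(primitiveE H2) => se ee e0 nsplit; apply/(primitiveE H2); split.
- exact (sym_mxconj isoA se).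
- by rewrite -mxconjM // ee.
- by rewrite mxconj_eq0.
by move=> /(sym_splits_mxconj (isom_star_inv isoA)); rewrite mxconjK.
Qed.

Lemma frame_mxconj (J : finType) (F : J -> 'M[k]_n) :
  frame b F -> frame b (fun j => mxconj a (F j)).
Proof.
case=> primF [orthF sumF]; split; first by move=> j; apply: primitive_mxconj.
split; first by move=> i j ij; exact (mxconj_jorth au (orthF i j ij)).
by rewrite -mxconj_sum sumF mxconj1.
Qed.

End FrameConjugation.

Section DecompositionConjugation.
Variables (k : fieldType) (n : nat) (I : finType) (X : I -> 'M[k]_n).
Hypothesis HX : direct_decomp X.
Variable a : 'M[k]_n.
Hypothesis au : a \in unitmx.

Lemma projE_mxconj i : mxconj a (projE X i) = projE (fun j => X j *m a) i.
Proof.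
have HXa := direct_decompMr HX au.
apply: (eq_mulmx_decomp HXa) => j _ /submxP[w ->].
rewrite (projE_mul HXa i (submxMl w _)) /mxconj (mulmxA w (X j) a).
have vX : (w *m X j <= X j)%MS := submxMl w _.
rewrite (mulmxA _ (invmx a *m _)) (mulmxA _ (invmx a)) (mulmxK au) (projE_mul HX i vX).
by case: (i == j); rewrite ?mul0mx.
Qed.

Lemma mxconj_projE_eqmx i : (X i *m a == mxconj a (projE X i))%MS.
Proof.
rewrite projE_mxconj; apply/eqmxP/eqmx_sym/eqmxP.
exact: projE_eqmx (direct_decompMr HX au) i.
Qed.

End DecompositionConjugation.

Unset Implicit Arguments.

Theorem theorem4p29 (k : finFieldType) (n m : nat)
    (b : 'rV[k]_n -> 'rV[k]_n -> 'rV[k]_m)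
    (Hodd : (2%N \notin [pchar k]))
    (Hbil : bilinear_map b) (Hherm : hermitian_map b) (Hnd : nondegenerate_map b)
    (I : finType) (X : I -> 'M[k]_n) (HX : direct_decomp X) :
  (* (i) *)
  ((forall i, Sym b (projE X i)) <-> perp_decomp b X) /\
  (* (ii) *)
  (fully_refined b X <-> frame b (projE X)) /\
  (* (iii) *)
  (perp_decomp b X ->
   forall (alpha : 'M[k]_n) (alphah : 'M[k]_m), isom_star b alpha alphah ->
     (forall i, (X i *m alpha == invmx alpha *m projE X i *m alpha)%MS) /\
     (forall i, invmx alpha *m projE X i *m alpha = projE (fun j => X j *m alpha) i)) /\
  (* in particular: Isom^*(b) acts by conjugation on the frames of Sym(b) *)
  (forall (alpha : 'M[k]_n) (alphah : 'M[k]_m), isom_star b alpha alphah ->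
   forall (J : finType) (F : J -> 'M[k]_n), frame b F ->
     frame b (fun j => invmx alpha *m F j *m alpha)).
Proof.
have H2 : (2%:R : k) != 0 by apply: contraNneq Hodd => two0; rewrite inE /= two0 eqxx.
split; first exact (sym_projE_perp_decomp Hbil HX).
split; first exact (fully_refined_frame Hbil Hnd H2 HX).
split=> [_ alpha alphah [au _ _] | alpha alphah isoA]; first split=> i.
- exact (mxconj_projE_eqmx HX au i).
- exact (projE_mxconj HX au i).
- exact: (frame_mxconj H2 isoA).
Qed.
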